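(* Let $R$ be a DT ring with $2\in U(R)$. Then $\Delta(R)$ is a two-sided ideal of $R$, and $\Delta(R)=J(R)$.
   Context: All rings are associative with identity; $J(R)$ is the Jacobson radical, $U(R)$ the group of units. $\Delta(R)=\{x\in R: x+u\in U(R)\text{ for all }u\in U(R)\}$. $\mathrm{Tr}(R)=\{x\in R: x^3=x\}$. A ring $R$ is a DT ring if every $r\in R$ can be written $r=e+d$ with $e\in\mathrm{Tr}(R)$ and $d\in\Delta(R)$. *)

From mathcomp Require Import all_boot all_algebra.
Set Implicit Arguments. Unset Strict Implicit. Unset Printing Implicit Defensive.
Import GRing.Theory.
Local Open Scope ring_scope.

Definition Delta (R : unitRingType) (x : R) : Prop :=
  forall u : R, u \is a GRing.unit -> (x + u) \is a GRing.unit.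

Definition Tr (R : unitRingType) (x : R) : Prop := x ^+ 3 = x.

Definition DT_ring (R : unitRingType) : Prop :=
  forall r : R, exists e d : R, Tr e /\ Delta d /\ r = e + d.

Definition left_ideal (R : unitRingType) (I : R -> Prop) : Prop :=
  I 0 /\ (forall x y, I x -> I y -> I (x + y)) /\ (forall x, I x -> I (- x))
  /\ (forall r x, I x -> I (r * x)).

Definition two_sided_ideal (R : unitRingType) (I : R -> Prop) : Prop :=
  left_ideal I /\ (forall x r, I x -> I (x * r)).

Definition maximal_left_ideal (R : unitRingType) (M : R -> Prop) : Prop :=
  left_ideal M /\ ~ M 1 /\
  (forall N : R -> Prop, left_ideal N -> ~ N 1 -> (forall x, M x -> N x) ->
     forall x, N x -> M x).

Definition Jac (R : unitRingType) (x : R) : Prop :=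
  forall M : R -> Prop, maximal_left_ideal M -> M x.

From mathcomp Require Import all_boot all_algebra.
From mathcomp Require Import boolp classical_sets.
Import GRing.Theory.
Local Open Scope ring_scope.
Local Open Scope classical_set_scope.
Set Implicit Arguments. Unset Strict Implicit.

(* If 2 is invertible, every tripotent e is half the sum of the units
   e + (1 - e^2) and e - (1 - e^2), whose squares are 1. Since Delta(R) is
   closed under sums, products and multiplication by units, it absorbs
   multiplication by tripotents, hence, in a DT ring, by every element.
   An element x of a left ideal contained in Delta(R) has 1 - r x invertible
   for all r, so it lies in every maximal left ideal; conversely 1 + y is
   invertible for y in J(R) (Zorn's lemma), which gives J(R) <= Delta(R). *)

Section Delta.
Variable R : unitRingType.
Implicit Types x y u v e : R.

Lemma Delta0 : Delta (0 : R).
Proof. by move=> u Uu; rewrite add0r. Qed.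

Lemma DeltaD x y : Delta x -> Delta y -> Delta (x + y).
Proof. by move=> Dx Dy u Uu; rewrite -addrA; apply/Dx/Dy. Qed.

Lemma DeltaN x : Delta x -> Delta (- x).
Proof.
move=> Dx u Uu; rewrite -unitrN opprD opprK.
by apply: Dx; rewrite unitrN.
Qed.

Lemma Delta_unitMl u x : u \is a GRing.unit -> Delta x -> Delta (u * x).
Proof.
move=> Uu Dx v Uv.
have -> : u * x + v = u * (x + u^-1 * v) by rewrite mulrDr mulVKr.
by rewrite unitrMr //; apply: Dx; rewrite unitrMl ?unitrV.
Qed.

Lemma Delta_unitMr u x : u \is a GRing.unit -> Delta x -> Delta (x * u).
Proof.
move=> Uu Dx v Uv.
have -> : x * u + v = (x + v * u^-1) * u by rewrite mulrDl mulrVK.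
by rewrite unitrMl //; apply: Dx; rewrite unitrMr ?unitrV.
Qed.

Lemma DeltaM x y : Delta x -> Delta y -> Delta (x * y).
Proof.
move=> Dx Dy v Uv; pose a := v^-1 * x.
have Da : Delta a by apply: Delta_unitMl; rewrite ?unitrV.
have Uy1 : y - 1 \is a GRing.unit by apply: Dy; rewrite unitrN unitr1.
have -> : x * y + v = v * (a * (y - 1) + (a + 1)).
  by rewrite mulrBr mulr1 addrA subrK /a -mulrA mulrDr mulr1 mulVKr.
by rewrite unitrMr //; apply: (Delta_unitMr Uy1 Da); apply: Da; rewrite unitr1.
Qed.

Lemma tripotent_mul2n_units e : e ^+ 3 = e ->
  exists u v, [/\ u \is a GRing.unit, v \is a GRing.unit & e *+ 2 = u + v].
Proof.
move=> e3; pose g := 1 - e * e.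
have eg : e * g = 0 by rewrite mulrBr mulr1 mulrA -expr2 -exprSr e3 subrr.
have ge : g * e = 0 by rewrite mulrBl mul1r -mulrA -expr2 -exprS e3 subrr.
have gg : g * g = g by rewrite {2}/g mulrBr mulr1 mulrA ge mul0r subr0.
have ee : e * e + g = 1 by rewrite addrC subrK.
clearbody g.
have inv_sqr w : w * w = 1 -> w \is a GRing.unit.
  by move=> ww; apply/unitrP; exists w.
exists (e + g), (e - g); split.
- by apply: inv_sqr; rewrite mulrDl !mulrDr eg ge gg addr0 add0r ee.
- by apply: inv_sqr; rewrite mulrBl !mulrBr eg ge gg subr0 sub0r opprK ee.
- by rewrite addrACA subrr addr0 mulr2n.
Qed.

Section TwoUnit.
Hypothesis unit2 : (2%:R : R) \is a GRing.unit.

Lemma tripotent_half_sum_units e : e ^+ 3 = e ->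
  exists u v, [/\ u \is a GRing.unit, v \is a GRing.unit & e = 2%:R^-1 * (u + v)].
Proof.
move=> /tripotent_mul2n_units[u [v [Uu Uv e2]]]; exists u, v; split=> //.
by rewrite -e2 -(mulr_natl e 2) mulKr.
Qed.

Lemma Delta_tripotentMl e x : e ^+ 3 = e -> Delta x -> Delta (e * x).
Proof.
move=> /tripotent_half_sum_units[u [v [Uu Uv ->]]] Dx.
have U2 : (2%:R^-1 : R) \is a GRing.unit by rewrite unitrV.
by rewrite -mulrA mulrDl mulrDr; apply: DeltaD; apply: Delta_unitMl => //;
  apply: Delta_unitMl.
Qed.

Lemma Delta_tripotentMr e x : e ^+ 3 = e -> Delta x -> Delta (x * e).
Proof.
move=> /tripotent_half_sum_units[u [v [Uu Uv ->]]] Dx.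
have U2 : (2%:R^-1 : R) \is a GRing.unit by rewrite unitrV.
by rewrite mulrA mulrDr; apply: DeltaD; apply: Delta_unitMr => //;
  apply: Delta_unitMr.
Qed.

Lemma DT_Delta_two_sided_ideal : DT_ring R -> two_sided_ideal (@Delta R).
Proof.
move=> DT; split; [do !split; [exact: Delta0 | exact: DeltaD | exact: DeltaN |] |].
- move=> r x Dx; have [e [d [e3 [Dd ->]]]] := DT r.
  by rewrite mulrDl; apply: DeltaD; [apply: Delta_tripotentMl | apply: DeltaM].
- move=> x r Dx; have [e [d [e3 [Dd ->]]]] := DT r.
  by rewrite mulrDr; apply: DeltaD; [apply: Delta_tripotentMr | apply: DeltaM].
Qed.

End TwoUnit.
End Delta.

Section Jacobson.
Variable R : unitRingType.
Implicit Types x y : R.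

Lemma left_ideal_chain_bigcup (I : Type) (C : set I) (X : I -> set R) :
  C !=set0 -> (forall i, C i -> left_ideal (X i)) ->
  (forall i j, C i -> C j -> X i `<=` X j \/ X j `<=` X i) ->
  left_ideal (\bigcup_(i in C) X i).
Proof.
move=> [i0 Ci0] XI Xtot; do !split.
- by exists i0 => //; have [] := XI i0 Ci0.
- move=> a b [i Ci Xia] [j Cj Xjb].
  have [Xij|Xji] := Xtot i j Ci Cj.
  + by exists j => //; have [_ [XD _]] := XI j Cj; apply: XD => //; apply: Xij.
  + by exists i => //; have [_ [XD _]] := XI i Ci; apply: XD => //; apply: Xji.
- by move=> a [i Ci Xia]; exists i => //; have [_ [_ [XN _]]] := XI i Ci; apply: XN.
- by move=> r a [i Ci Xia]; exists i => //; have [_ [_ [_ XM]]] := XI i Ci; apply: XM.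
Qed.

Lemma exists_maximal_left_ideal (L : set R) : left_ideal L -> ~ L 1 ->
  exists M, maximal_left_ideal M /\ L `<=` M.
Proof.
move=> LI L1.
pose T := {X : set R | [/\ left_ideal X, ~ X 1 & L `<=` X]}.
pose le (A B : T) := `[< sval A `<=` sval B >].
pose L0 : T := exist _ L (And3 LI L1 (@subset_refl _ L)).
have [| | |M maxM] := @ZL_preorder T L0 le.
- by move=> A; apply/asboolP.
- by move=> A B C /asboolP AB /asboolP BC; apply/asboolP; apply: subset_trans BC.
- move=> C Ctot; have [[A CA]|C0] := pselect (C !=set0); last first.
    by exists L0 => A CA; case: C0; exists A.
  pose U := \bigcup_(A in C) sval A.
  have UI : left_ideal U.
    apply: left_ideal_chain_bigcup; first by exists A.
      by case=> X [].
    by move=> B D CB CD; have [/asboolP|/asboolP] := Ctot B D CB CD; [left|right].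
  have U1 : ~ U 1 by move=> [B _]; case: B => X [_ X1 _] /X1.
  have LU : L `<=` U.
    by move=> z Lz; exists A => //; case: A CA => X /= [_ _ LX] _; apply: LX.
  by exists (exist _ U (And3 UI U1 LU)) => B CB; apply/asboolP => z Bz; exists B.
case: M maxM => M [MI M1 LM] maxM; exists M; split=> //.
do 2!split=> //; move=> N NI N1 MN.
have LN : L `<=` N by apply: subset_trans MN.
by apply/asboolP; apply: (maxM (exist _ N (And3 NI N1 LN))); apply/asboolP.
Qed.

Lemma JacMl r x : Jac x -> Jac (r * x).
Proof. by move=> Jx M MM; have [[_ [_ [_ MMl]]] _] := MM; apply: MMl; apply: Jx. Qed.

Lemma Jac_left_inverse y : Jac y -> exists s, s * (1 + y) = 1.
Proof.
move=> Jy; apply: contrapT => noinv.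
pose L := fun z => exists r, z = r * (1 + y).
have LI : left_ideal L.
  do !split.
  - by exists 0; rewrite mul0r.
  - by move=> _ _ [a ->] [b ->]; exists (a + b); rewrite mulrDl.
  - by move=> _ [a ->]; exists (- a); rewrite mulNr.
  - by move=> s _ [a ->]; exists (s * a); rewrite mulrA.
have L1 : ~ L 1 by move=> [r r1]; apply: noinv; exists r.
have [M [MM LM]] := exists_maximal_left_ideal LI L1.
have M1y : M (1 + y) by apply: LM; exists 1; rewrite mul1r.
have [[_ [MD [MN _]]] [M1 _]] := MM.
by apply: M1; rewrite -(addrK y 1); apply: MD => //; apply: MN; apply: Jy.
Qed.

Lemma Jac_unit1D y : Jac y -> (1 + y) \is a GRing.unit.
Proof.
move=> Jy; have [s sy] := Jac_left_inverse Jy.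
have s_eq : s = 1 + - (s * y) by rewrite -sy mulrDr mulr1 addrK.
have [t ts] : exists t, t * s = 1.
  by rewrite s_eq; apply: Jac_left_inverse; rewrite -mulNr; apply: JacMl.
have t_eq : t = 1 + y by rewrite -[t]mulr1 -{1}sy mulrA ts mul1r.
by apply/unitrP; exists s; split; last rewrite -t_eq.
Qed.

Lemma Jac_Delta x : Jac x -> Delta x.
Proof.
move=> Jx u Uu.
have -> : x + u = u * (1 + u^-1 * x) by rewrite mulrDr mulr1 mulVKr // addrC.
by rewrite unitrMr //; apply: Jac_unit1D; apply: JacMl.
Qed.

Lemma quasi_regular_Jac x : (forall r, (1 - r * x) \is a GRing.unit) -> Jac x.
Proof.
move=> qr M [[M0 [MD [MN MMl]]] [M1 Mmax]]; apply: contrapT => nMx.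
pose N := fun y => exists m r, M m /\ y = m + r * x.
have NI : left_ideal N.
  do !split.
  - by exists 0, 0; split; [exact: M0 | rewrite mul0r addr0].
  - move=> _ _ [m1 [r1 [Mm1 ->]]] [m2 [r2 [Mm2 ->]]]; exists (m1 + m2), (r1 + r2).
    by split; [apply: MD | rewrite mulrDl addrACA].
  - move=> _ [m [r [Mm ->]]]; exists (- m), (- r).
    by split; [apply: MN | rewrite opprD mulNr].
  - move=> s _ [m [r [Mm ->]]]; exists (s * m), (s * r).
    by split; [apply: MMl | rewrite mulrDr mulrA].
have [m [r [Mm one_eq]]] : N 1.
  apply: contrapT => N1; apply: nMx; apply: (Mmax N NI N1).
    by move=> y My; exists y, 0; rewrite mul0r addr0.
  by exists 0, 1; rewrite add0r mul1r.
have Um : m \is a GRing.unit.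
  by rewrite -[m]addr0 -(subrr (r * x)) addrA -one_eq; apply: qr.
by apply: M1; rewrite -(mulVr Um); apply: MMl.
Qed.

End Jacobson.

Theorem proposition4p3 (R : unitRingType) :
  DT_ring R -> (2%:R : R) \is a GRing.unit ->
  two_sided_ideal (@Delta R) /\ (forall x : R, Delta x <-> Jac x).
Proof.
move=> DT unit2; have DI := DT_Delta_two_sided_ideal unit2 DT.
split=> // x; split; last exact: Jac_Delta.
move=> Dx; apply: quasi_regular_Jac => r.
have [[_ [_ [_ DMl]]] _] := DI.
by rewrite addrC; apply: (DeltaN (DMl r x Dx)); rewrite unitr1.
Qed.
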